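(* For any finite simple graph $X$ and any update sequence $\pi\in S_X$, the mixed extended threshold SDS map $\mathbf{F}^\updownarrow_\pi$ has no periodic orbits of length $\ge 2$.
   Context: Let $X$ be a finite simple graph with vertices $1,\dots,n$; $d(v)$ is the degree of $v$ and $n[v]$ the closed neighborhood of $v$. An extended vertex state is $s_v=(x_v,k_v)\in\{0,1\}\times\{1,\dots,d(v)+1\}$; $\mathcal{S}$ is the product of these sets. Let $\sigma(x[v])=|\{u\in n[v]:x_u=1\}|$. The mixed vertex function maps $(x_v,k_v)$ to $(x_v',k_v')$ with $x_v'=1$ iff $\sigma(x[v])\ge k_v$ (else $0$), and $k_v'=k_v+1$ if $x_v=0$ and $\sigma(x[v])\ge k_v$; $k_v'=k_v-1$ if $x_v=1$ and $\sigma(x[v])<k_v$; $k_v'=k_v$ otherwise. The local map $F^\updownarrow_v$ updates only coordinate $v$ by this rule, and for a permutation $\pi=(\pi_1,\dots,\pi_n)$ of the vertices, $\mathbf{F}^\updownarrow_\pi=F^\updownarrow_{\pi_n}\circ\cdots\circ F^\updownarrow_{\pi_1}$. A periodic orbit of length $m$ is a cycle of $m$ distinct states under iteration. *)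

From mathcomp Require Import all_boot all_order all_fingroup.
Set Implicit Arguments. Unset Strict Implicit. Unset Printing Implicit Defensive.

Definition simple_graph (n : nat) (adj : rel 'I_n) : Prop :=
  (forall u v, adj u v = adj v u) /\ (forall v, adj v v = false).

Definition cnbhd n (adj : rel 'I_n) (v : 'I_n) : {set 'I_n} :=
  [set u | (u == v) || adj v u].
Definition deg n (adj : rel 'I_n) (v : 'I_n) : nat := #|[set u | adj v u]|.

(* extended states: s v = (x_v, k_v) *)
Definition estate (n : nat) := {ffun 'I_n -> bool * nat}.

Definition in_S n (adj : rel 'I_n) (s : estate n) : Prop :=
  forall v, 1 <= (s v).2 <= (deg adj v).+1.

Definition sigma n (adj : rel 'I_n) (s : estate n) (v : 'I_n) : nat :=
  #|[set u in cnbhd adj v | (s u).1]|.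

Definition mixed_vf (xv : bool) (kv sig : nat) : bool * nat :=
  let x' := kv <= sig in
  let k' := if ~~ xv && (kv <= sig) then kv.+1
            else if xv && (sig < kv) then kv.-1 else kv in
  (x', k').

Definition Floc n (adj : rel 'I_n) (v : 'I_n) (s : estate n) : estate n :=
  [ffun u => if u == v then mixed_vf (s v).1 (s v).2 (sigma adj s v) else s u].

(* SDS map F_pi = F_{pi_n} o ... o F_{pi_1} (pi_1 applied first) *)
Definition SDS n (adj : rel 'I_n) (pi : 'S_n) (s : estate n) : estate n :=
  foldl (fun t i => Floc adj (pi i) t) s (enum 'I_n).

Definition periodic_orbit n (F : estate n -> estate n) (S : estate n -> Prop)
  (s : estate n) (m : nat) : Prop :=
  [/\ 0 < m, S s, iter m F s = s & uniq [seq iter i F s | i <- iota 0 m]].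

From mathcomp Require Import all_boot all_order all_fingroup.
From mathcomp Require Import ssralg ssrnum ssrint zify ring.
Import GRing.Theory Num.Theory Order.TTheory.
Set Implicit Arguments. Unset Strict Implicit. Unset Printing Implicit Defensive.

(* The integer energy
     E(s) = sum_u x_u (2 k_u - 3) - sum_{u,w adjacent} x_u x_w
   is a Lyapunov function: every local map either fixes the state or lowers E.
   With N the number of active neighbours of v, switching x_v on (k_v <= N)
   changes E by 2 k_v - 1 - 2 N, and switching it off (N + 1 < k_v) by
   2 N + 3 - 2 k_v; the offset 3 makes both strictly negative.  Hence the SDS
   map also fixes or lowers E, so a state on a periodic orbit is fixed. *)

Section Descent.

Variables (T : Type) (disp : Order.disp_t) (R : porderType disp) (E : T -> R).
Local Open Scope order_scope.

Definition descending (F : T -> T) := forall s, F s = s \/ E (F s) < E s.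

Lemma descending_foldl (A : Type) (f : T -> A -> T) (l : seq A) :
  (forall a, descending (f^~ a)) -> descending (fun s => foldl f s l).
Proof.
move=> fdesc; elim: l => [|a l IHl] s /=; first by left.
have [-> | lt_fa] := fdesc a s; first exact: IHl.
have [-> | lt_l] := IHl (f s a); first by right.
by right; apply: lt_trans lt_fa.
Qed.

Lemma descending_iter_le F s k : descending F -> E (iter k F s) <= E s.
Proof.
move=> Fdesc; elim: k => [|k IHk] //=.
have [-> | lt_F] := Fdesc (iter k F s); first exact: IHk.
exact: le_trans (ltW lt_F) IHk.
Qed.

Lemma descending_periodic_fixed F s k :
  descending F -> iter k.+1 F s = s -> F s = s.
Proof.
move=> Fdesc periodic; have [// | lt_F] := Fdesc s.
have := descending_iter_le (F s) k Fdesc.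
by rewrite -iterSr periodic => /(lt_le_trans lt_F); rewrite ltxx.
Qed.

End Descent.

Lemma sum_sym_bigD1 (I : finType) (V : nmodType) (f : I -> I -> V) (v : I) :
  (forall u w, f u w = f w u) -> f v v = 0%R ->
  (\sum_u \sum_w f u w =
   (\sum_(w | w != v) f v w) *+ 2 + \sum_(u | u != v) \sum_(w | w != v) f u w)%R.
Proof.
move=> fsym fvv; rewrite (bigD1 v) //= (bigD1 v) //= fvv add0r mulr2n -addrA.
congr (_ + _)%R; rewrite -big_split /=; apply: eq_bigr => u _.
by rewrite (bigD1 v) //= fsym.
Qed.

Section Energy.
Local Open Scope ring_scope.

Variables (n : nat) (adj : rel 'I_n).
Hypotheses (adj_sym : forall u w, adj u w = adj w u) (adj_irr : forall v, adj v v = false).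

Definition vertex_energy (sv : bool * nat) (nbrs : nat) : int :=
  sv.1%:R * (2 * sv.2%:R - 3) - 2 * sv.1%:R * nbrs%:R.

Definition active_nbrs (s : estate n) (v : 'I_n) : nat :=
  #|[set w | adj v w & (s w).1]|.

Definition energy (s : estate n) : int :=
  \sum_u (s u).1%:R * (2 * (s u).2%:R - 3)
  - \sum_u \sum_w (s u).1%:R * (s w).1%:R * (adj u w)%:R.

Definition energy_off (v : 'I_n) (s : estate n) : int :=
  \sum_(u | u != v) (s u).1%:R * (2 * (s u).2%:R - 3)
  - \sum_(u | u != v) \sum_(w | w != v) (s u).1%:R * (s w).1%:R * (adj u w)%:R.

Lemma sum_active_nbrs (s : estate n) (v : 'I_n) :
  \sum_(w | w != v) (s w).1%:R * (adj v w)%:R = (active_nbrs s v)%:R :> int.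
Proof.
rewrite /active_nbrs -sum1_card natr_sum big_mkcond [RHS]big_mkcond /=.
apply: eq_bigr => w _; rewrite inE.
case: (eqVneq w v) => [->|_]; first by rewrite adj_irr mulr0.
by case: (adj v w); case: (s w).1.
Qed.

Lemma energy_bigD1 (s : estate n) (v : 'I_n) :
  energy s = vertex_energy (s v) (active_nbrs s v) + energy_off v s.
Proof.
rewrite /energy /energy_off /vertex_energy (bigD1 v) //=.
rewrite (sum_sym_bigD1 (v := v)); last by rewrite adj_irr mulr0.
  have -> : \sum_(w | w != v) (s v).1%:R * (s w).1%:R * (adj v w)%:R
            = (s v).1%:R * (active_nbrs s v)%:R :> int.
    by rewrite -sum_active_nbrs mulr_sumr; apply: eq_bigr => w _; rewrite mulrA.
  ring.
by move=> u w; rewrite adj_sym; congr (_ * _); exact: mulrC.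
Qed.

Section AgreeOff.

Variables (v : 'I_n) (s t : estate n).
Hypothesis agree : forall u, u != v -> t u = s u.

Lemma active_nbrs_agree : active_nbrs t v = active_nbrs s v.
Proof.
apply: eq_card => w; rewrite !inE.
by case: (eqVneq w v) => [->|/agree ->]; rewrite ?adj_irr.
Qed.

Lemma energy_off_agree : energy_off v t = energy_off v s.
Proof.
rewrite /energy_off; congr (_ - _).
  by apply: eq_bigr => u /agree ->.
by apply: eq_bigr => u /agree ->; apply: eq_bigr => w /agree ->.
Qed.

End AgreeOff.

Lemma sigma_active_nbrs (s : estate n) (v : 'I_n) :
  sigma adj s v = ((s v).1 + active_nbrs s v)%N.
Proof.
rewrite /sigma (cardsD1 v) !inE eqxx /=; congr (_ + _)%N.
apply: eq_card => w; rewrite !inE.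
by case: (eqVneq w v) => [->|]; rewrite ?adj_irr ?andbF.
Qed.

Lemma mixed_vf_descending (b : bool) (k nbrs : nat) :
  let sv' := mixed_vf b k (b + nbrs) in
  sv' = (b, k) \/ vertex_energy sv' nbrs < vertex_energy (b, k) nbrs.
Proof.
rewrite /mixed_vf /vertex_energy /=.
case: b; case: leqP => hk /=; rewrite ?(leqNgt, hk) /=; (by left) || right; lia.
Qed.

Lemma Floc_descending v : descending energy (Floc adj v).
Proof.
move=> s; set t := Floc adj v s.
have agree u : u != v -> t u = s u by move=> uv; rewrite /t ffunE (negbTE uv).
have tv : t v = mixed_vf (s v).1 (s v).2 ((s v).1 + active_nbrs s v).
  by rewrite /t ffunE eqxx sigma_active_nbrs.
have [fixed | lt_v] := mixed_vf_descending (s v).1 (s v).2 (active_nbrs s v).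
  left; apply/ffunP => u; case: (eqVneq u v) => [->|/agree //].
  by rewrite tv fixed; case: (s v).
right; rewrite (energy_bigD1 t v) (energy_bigD1 s v).
rewrite (active_nbrs_agree agree) (energy_off_agree agree) ltrD2r tv.
by case: (s v) lt_v.
Qed.

End Energy.

Theorem proposition3p6 (n : nat) (adj : rel 'I_n) (pi : 'S_n) :
  simple_graph adj ->
  forall (s : estate n) (m : nat),
    periodic_orbit (SDS adj pi) (in_S adj) s m -> m < 2.
Proof.
move=> [adj_sym adj_irr] s m [m_gt0 _ periodic orbit_uniq].
have SDS_desc : descending (energy adj) (SDS adj pi).
  by move=> t; apply: descending_foldl => i; apply: Floc_descending.
case: m m_gt0 periodic orbit_uniq => [|[|m]] // _ periodic.
have fixed : SDS adj pi s = s := descending_periodic_fixed SDS_desc periodic.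
by rewrite /= inE fixed eqxx.
Qed.
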